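(* Let $N>0$, $m>0$, $F>0$, $\alpha>0$, $w>0$, $\tau\in(0,1)$, $g\geq 0$, $L_g\geq 0$, and define \[ L=\frac{N\left[(1-\tau)(mL_g+\alpha F)+(mg+F)mN\right]}{\alpha+(Nm-\alpha)\tau},\qquad q=\frac{(1-\tau)(L+L_g-\alpha g)}{\left(Nm+\alpha(1-\tau)\right)(L+L_g)}, \] \[ p=\frac{L+L_g}{L+L_g-\alpha g}\left(mw+\frac{\alpha(1-\tau)w}{N}\right). \] If $Nm>\alpha$, then $L+L_g-\alpha\left((L+L_g)q+g\right)>0$, and the price $p$ is positive.
   Context: These are the symmetric-equilibrium quantities of a monopolistic-competition general equilibrium model: $N$ is the measure of firms (= varieties), $m$ and $F$ the marginal and fixed labor inputs, $\alpha$ the CARA utility parameter, $w$ the nominal wage, $\tau$ the proportional income tax rate, $g$ the government purchase of each variety, $L_g$ government employment, $L$ private employment, $q$ per-capita consumption of each variety, and $p$ the common price. They satisfy $L=N[m(L+L_g)q+mg+F]$, $q=(1-\tau)w/(Np)$, and equivalently $p=mw(L+L_g)/\left(L+L_g-\alpha((L+L_g)q+g)\right)$. *)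

From Stdlib Require Import Reals.
Open Scope R_scope.

Definition Lpriv (N m F alpha tau g Lg : R) : R :=
  N * ((1 - tau) * (m * Lg + alpha * F) + (m * g + F) * m * N)
  / (alpha + (N * m - alpha) * tau).

Definition qcons (N m F alpha tau g Lg : R) : R :=
  let L := Lpriv N m F alpha tau g Lg in
  (1 - tau) * (L + Lg - alpha * g)
  / ((N * m + alpha * (1 - tau)) * (L + Lg)).

Definition price (N m F alpha w tau g Lg : R) : R :=
  let L := Lpriv N m F alpha tau g Lg in
  (L + Lg) / (L + Lg - alpha * g) * (m * w + alpha * (1 - tau) * w / N).

(** The denominator [D = alpha + (N m - alpha) tau] of [L] lies strictly
    between [alpha] and [N m], so [alpha D < (N m)^2]; splitting the
    government purchases [g (N m)^2] off the numerator of [L] then gives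
    [L - alpha g > 0].  With this, the markup condition is the identity
    [S - alpha (S q + g) = (S - alpha g) N m / (N m + alpha (1 - tau))] for
    [S = L + L_g], and the price is a product of positive factors. *)

From Stdlib Require Import Reals Lra Psatz.
Open Scope R_scope.

Lemma interp_strict_bounds (a b t : R) :
  a < b -> 0 < t < 1 -> a < a + (b - a) * t < b.
Proof. intros Hab Ht; split; nra. Qed.

Lemma Lpriv_sub_alpha_g (N m F alpha tau g Lg : R) :
  alpha + (N * m - alpha) * tau <> 0 ->
  Lpriv N m F alpha tau g Lg - alpha * g =
    (N * ((1 - tau) * (m * Lg + alpha * F) + F * m * N)
     + g * ((N * m) ^ 2 - alpha * (alpha + (N * m - alpha) * tau)))
    / (alpha + (N * m - alpha) * tau).
Proof. intros HD; unfold Lpriv; field; exact HD. Qed.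

Lemma Lpriv_gt_alpha_g (N m F alpha tau g Lg : R) :
  0 < N -> 0 < m -> 0 < F -> 0 < alpha -> 0 < tau < 1 ->
  0 <= g -> 0 <= Lg -> alpha < N * m ->
  alpha * g < Lpriv N m F alpha tau g Lg.
Proof.
  intros HN Hm HF Ha Ht Hg HLg HNm.
  destruct (interp_strict_bounds alpha (N * m) tau HNm Ht) as [HDlo HDhi].
  apply Rlt_0_minus.
  rewrite (Lpriv_sub_alpha_g N m F alpha tau g Lg) by lra.
  set (D := alpha + (N * m - alpha) * tau) in *.
  assert (Hgap : alpha * D < (N * m) ^ 2) by nra.
  assert (Hbase : 0 < N * ((1 - tau) * (m * Lg + alpha * F) + F * m * N)).
  { apply Rmult_lt_0_compat; [exact HN|].
    assert (0 <= (1 - tau) * (m * Lg + alpha * F))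
      by (apply Rmult_le_pos; nra).
    assert (0 < F * m * N) by (apply Rmult_lt_0_compat; [apply Rmult_lt_0_compat|]; lra).
    lra. }
  apply Rdiv_lt_0_compat; nra.
Qed.

Lemma markup_identity (S K alpha tau g : R) :
  S <> 0 -> K + alpha * (1 - tau) <> 0 ->
  S - alpha * (S * ((1 - tau) * (S - alpha * g) / ((K + alpha * (1 - tau)) * S)) + g)
  = (S - alpha * g) * K / (K + alpha * (1 - tau)).
Proof. intros HS HK; field; auto. Qed.

Theorem proposition2 (N m F alpha w tau g Lg : R) :
  0 < N -> 0 < m -> 0 < F -> 0 < alpha -> 0 < w ->
  0 < tau < 1 -> 0 <= g -> 0 <= Lg ->
  N * m > alpha ->
  let L := Lpriv N m F alpha tau g Lg in
  let q := qcons N m F alpha tau g Lg in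
  let p := price N m F alpha w tau g Lg in
  L + Lg - alpha * ((L + Lg) * q + g) > 0 /\ p > 0.
Proof.
  intros HN Hm HF Ha Hw Ht Hg HLg HNm L q p.
  assert (HL : alpha * g < L) by (apply Lpriv_gt_alpha_g; auto).
  assert (HS : 0 < L + Lg - alpha * g) by lra.
  destruct Ht as [Ht0 Ht1].
  assert (HK : 0 < N * m + alpha * (1 - tau)) by nra.
  assert (HNm0 : 0 < N * m) by nra.
  split.
  - unfold q, qcons; fold L.
    rewrite markup_identity by nra.
    apply Rdiv_lt_0_compat; nra.
  - unfold p, price; fold L.
    apply Rmult_lt_0_compat.
    + apply Rdiv_lt_0_compat; nra.
    + assert (0 < alpha * (1 - tau) * w) by
        (apply Rmult_lt_0_compat; [apply Rmult_lt_0_compat|]; lra).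
      assert (0 < alpha * (1 - tau) * w / N) by (apply Rdiv_lt_0_compat; lra).
      nra.
Qed.
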